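(* Let $\mathcal{H}$ be a separable, infinite dimensional, complex Hilbert space, let $\mathscr{U}$ be a free ultrafilter on $\mathbb{N}$, let $(T_{n})_{n\geq1}$ be a sequence in $\mathcal{B}(\mathcal{H})$ and let $B\in\mathcal{B}(\mathcal{H})$. (1) If $T_{n}\to B$ in the strong operator topology, then $B$ is unitarily equivalent to a restriction of $(T_{1},T_{2},\ldots)_{\mathscr{U}}$. (2) If $T_{n}\to B$ in the weak operator topology, then $B$ is unitarily equivalent to a compression of $(T_{1},T_{2},\ldots)_{\mathscr{U}}$. (3) If $T_{n}\to B$ in the $*$-strong operator topology, then $B$ is unitarily equivalent to a reducing part of $(T_{1},T_{2},\ldots)_{\mathscr{U}}$. (In each case $\sup_n\|T_n\|<\infty$, so the ultraproduct is well defined.)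
   Context: Let $\mathcal{H}^{\mathscr{U}}=\ell_\infty(\mathcal{H})/\{(x_n)_{n\ge1}\in\ell_\infty(\mathcal{H}):\lim_{n,\mathscr{U}}\|x_n\|=0\}$, with the image of $(x_n)$ denoted $(x_n)_{\mathscr{U}}$; it is a Hilbert space with inner product $\langle (x_n)_{\mathscr{U}},(y_n)_{\mathscr{U}}\rangle=\lim_{n,\mathscr{U}}\langle x_n,y_n\rangle$. For a norm-bounded sequence $(T_n)$ in $\mathcal{B}(\mathcal{H})$, the ultraproduct $(T_1,T_2,\ldots)_{\mathscr{U}}\in\mathcal{B}(\mathcal{H}^{\mathscr{U}})$ is $(x_n)_{\mathscr{U}}\mapsto(T_nx_n)_{\mathscr{U}}$. For an operator $T$ on a Hilbert space and a closed subspace $\mathcal{M}$: $T|_{\mathcal{M}}$ is a restriction if $\mathcal{M}$ is $T$-invariant; it is a reducing part if $\mathcal{M}$ is invariant under $T$ and $T^{*}$; the compression of $T$ to $\mathcal{M}$ is $PT|_{\mathcal{M}}$ with $P$ the orthogonal projection onto $\mathcal{M}$. $T_\alpha\to T$ in the $*$-strong operator topology means $T_\alpha\to T$ and $T_\alpha^*\to T^*$ strongly. *)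

From mathcomp Require Import all_boot all_order all_algebra.
From mathcomp Require Import reals.
From mathcomp Require Import complex.
Set Implicit Arguments. Unset Strict Implicit. Unset Printing Implicit Defensive.
Import Order.TTheory GRing.Theory Num.Theory.
Local Open Scope ring_scope.
Local Close Scope term_scope.

Section Defs.
Variable R : realType.
Local Notation C := (R[i]).
Variable V : lmodType C.
(* inner product, linear in the first argument *)
Variable ip : V -> V -> C.

Definition hnorm (x : V) : R := Num.sqrt (complex.Re (ip x x)).

Definition rseq_to (a : nat -> R) (l : R) : Prop :=
  forall e : R, 0 < e -> exists N : nat, forall n, (N <= n)%N -> `|a n - l| < e.
Definition cseq_to (a : nat -> C) (l : C) : Prop :=
  forall e : R, 0 < e -> exists N : nat, forall n, (N <= n)%N -> ComplexField.Normc.normc (a n - l) < e.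

Definition is_inner_product : Prop :=
  [/\ forall (a : C) (x y z : V), ip (a *: x + y) z = a * ip x z + ip y z,
      forall x y : V, ip y x = (ip x y)^*,
      forall x : V, complex.Im (ip x x) = 0 /\ 0 <= complex.Re (ip x x)
    & forall x : V, ip x x = 0 -> x = 0].

Definition is_complete : Prop :=
  forall u : nat -> V,
    (forall e : R, 0 < e -> exists N : nat, forall m n, (N <= m)%N -> (N <= n)%N ->
        hnorm (u m - u n) < e) ->
    exists l : V, rseq_to (fun n => hnorm (u n - l)) 0.

Definition is_hilbert : Prop := is_inner_product /\ is_complete.

Definition separable : Prop :=
  exists d : nat -> V, forall (x : V) (e : R), 0 < e -> exists n, hnorm (x - d n) < e.

Definition infinite_dimensional : Prop :=
  forall (n : nat) (s : 'I_n -> V), exists x : V,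
    ~ exists c : 'I_n -> C, x = \sum_(i < n) c i *: s i.

Definition bounded_op (T : V -> V) : Prop :=
  (forall (a : C) (x y : V), T (a *: x + y) = a *: T x + T y) /\
  exists M : R, forall x, hnorm (T x) <= M * hnorm x.

Definition is_adjoint (T S : V -> V) : Prop := forall x y, ip (T x) y = ip x (S y).

Definition sot_to (T : nat -> V -> V) (B : V -> V) : Prop :=
  forall x, rseq_to (fun n => hnorm (T n x - B x)) 0.
Definition wot_to (T : nat -> V -> V) (B : V -> V) : Prop :=
  forall x y, cseq_to (fun n => ip (T n x) y) (ip (B x) y).
Definition star_sot_to (T Tstar : nat -> V -> V) (B Bstar : V -> V) : Prop :=
  sot_to T B /\ sot_to Tstar Bstar.

End Defs.

Definition ultrafilter (U : (nat -> Prop) -> Prop) : Prop :=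
  [/\ U (fun _ => True),
      ~ U (fun _ => False),
      forall A B : nat -> Prop, U A -> (forall n, A n -> B n) -> U B,
      forall A B : nat -> Prop, U A -> U B -> U (fun n => A n /\ B n)
    & forall A : nat -> Prop, U A \/ U (fun n => ~ A n)].

Definition free_ultrafilter (U : (nat -> Prop) -> Prop) : Prop :=
  ultrafilter U /\ forall k : nat, ~ U (fun n => n = k).

Section Ultra.
Variable R : realType.
Local Notation C := (R[i]).
Variable V : lmodType C.
Variable ip : V -> V -> C.
Variable U : (nat -> Prop) -> Prop.
Local Notation hnorm := (hnorm ip).

Definition ulimR (a : nat -> R) (l : R) : Prop :=
  forall e : R, 0 < e -> U (fun n => `|a n - l| < e).
Definition ulimC (a : nat -> C) (l : C) : Prop :=
  forall e : R, 0 < e -> U (fun n => ComplexField.Normc.normc (a n - l) < e).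

(* elements of H^U are represented by bounded sequences x : nat -> V;
   (x_n)_U = (y_n)_U  iff  unull (x - y) *)
Definition ubounded (x : nat -> V) : Prop := exists M : R, forall n, hnorm (x n) <= M.
Definition uequiv (x y : nat -> V) : Prop := ulimR (fun n => hnorm (x n - y n)) 0.

(* W : H -> H^U (given through representatives) is a linear isometry;
   its range M is then a closed subspace of H^U and W : H -> M is unitary *)
Definition ultra_isometry (W : V -> nat -> V) : Prop :=
  [/\ forall x, ubounded (W x),
      forall (a : C) (x y : V), uequiv (W (a *: x + y)) (fun n => a *: W x n + W y n)
    & forall x y : V, ulimC (fun n => ip (W x n) (W y n)) (ip x y)].

(* B is unitarily equivalent (via W) to the restriction of (T_1,T_2,...)_U to the
   invariant subspace M = range W *)
Definition ultra_restriction (T : nat -> V -> V) (B : V -> V) : Prop :=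
  exists (W : V -> nat -> V),
  ultra_isometry W /\
  (forall x, exists y, uequiv (fun n => T n (W x n)) (W y)) /\
  (forall x, uequiv (fun n => T n (W x n)) (W (B x))).

(* B is unitarily equivalent (via W) to the compression P (T_n)_U |_M, M = range W,
   i.e. W^-1 P (T_n)_U W = B, i.e. <(T_n)_U W x, W y> = <B x, y> *)
Definition ultra_compression (T : nat -> V -> V) (B : V -> V) : Prop :=
  exists (W : V -> nat -> V),
  ultra_isometry W /\
  forall x y, ulimC (fun n => ip (T n (W x n)) (W y n)) (ip (B x) y).

(* reducing part: additionally M is invariant under ((T_n)_U)^* = (T_n^* )_U,
   where Tstar n is the adjoint of T n *)
Definition ultra_reducing (T Tstar : nat -> V -> V) (B : V -> V) : Prop :=
  exists (W : V -> nat -> V),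
  ultra_isometry W /\
  (forall x, exists y, uequiv (fun n => T n (W x n)) (W y)) /\
  (forall x, exists y, uequiv (fun n => Tstar n (W x n)) (W y)) /\
  (forall x, uequiv (fun n => T n (W x n)) (W (B x))).
End Ultra.

(* H embeds isometrically into H^U diagonally, x |-> (x, x, ...)_U.  A free
   ultrafilter contains every cofinite set, so limits along n -> oo are limits
   along U; hence strong (resp. weak) convergence T_n -> B gives
   (T_n x)_U = (B x)_U (resp. lim_U <T_n x, y> = <B x, y>), which says that the
   diagonal copy of H is invariant (resp. compressed) and carries B.  For the
   reducing part apply the same to the adjoints T_n^* -> B^*. *)
From mathcomp Require Import all_boot all_order all_algebra.
From mathcomp Require Import reals complex.
Import Order.TTheory GRing.Theory Num.Theory.
Local Open Scope ring_scope.

Section FreeUltrafilter.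
Variable U : (nat -> Prop) -> Prop.
Hypothesis HU : free_ultrafilter U.

Lemma free_ultrafilter_ge (N : nat) : U (fun n => (N <= n)%N).
Proof.
case: HU => [[UT _ Uup Ucap Ucompl] Ufree].
elim: N => [|N IH]; first exact: Uup UT _.
have UneqN : U (fun n => n <> N) by case: (Ucompl (fun n => n = N)) => // /Ufree.
apply: Uup (Ucap _ _ IH UneqN) _ => n [leNn neqnN].
by rewrite ltn_neqAle leNn andbT; apply/eqP => eqNn; apply: neqnN.
Qed.

Lemma free_ultrafilter_eventually (P : nat -> Prop) :
  (exists N, forall n, (N <= n)%N -> P n) -> U P.
Proof.
case=> N HN; case: HU => [[_ _ Uup _ _] _].
exact: Uup (free_ultrafilter_ge N) HN.
Qed.

Lemma rseq_to_ulimR (R : realType) (a : nat -> R) (l : R) :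
  rseq_to a l -> ulimR U a l.
Proof. by move=> al e e_gt0; apply: free_ultrafilter_eventually; exact: al. Qed.

Lemma cseq_to_ulimC (R : realType) (a : nat -> R[i]) (l : R[i]) :
  cseq_to a l -> ulimC U a l.
Proof. by move=> al e e_gt0; apply: free_ultrafilter_eventually; exact: al. Qed.

End FreeUltrafilter.

Section DiagonalEmbedding.
Variables (R : realType) (V : lmodType R[i]) (ip : V -> V -> R[i]).
Hypothesis Hip : is_inner_product ip.
Variable U : (nat -> Prop) -> Prop.
Hypothesis HU : free_ultrafilter U.

Definition diag_embedding (x : V) : nat -> V := fun=> x.

Lemma ip0l (y : V) : ip 0 y = 0.
Proof.
case: Hip => ipDl _ _ _.
have /eqP := ipDl 1 0 0 y; rewrite scaler0 addr0 mul1r.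
by rewrite -subr_eq0 opprD addrA subrr sub0r oppr_eq0 => /eqP.
Qed.

Lemma hnorm0 : hnorm ip 0 = 0.
Proof. by rewrite /hnorm ip0l /= sqrtr0. Qed.

Lemma normc0 : ComplexField.Normc.normc (0 : R[i]) = 0.
Proof. by rewrite /ComplexField.Normc.normc /= expr0n /= addr0 sqrtr0. Qed.

Lemma diag_embedding_isometry : ultra_isometry ip U diag_embedding.
Proof.
split=> [x | a x y | x y]; first by exists (hnorm ip x).
- apply: rseq_to_ulimR => // e e_gt0; exists 0%N => n _.
  by rewrite subrr hnorm0 subr0 normr0.
- apply: cseq_to_ulimC => // e e_gt0; exists 0%N => n _.
  by rewrite subrr normc0.
Qed.

Lemma sot_to_uequiv_diag {S : nat -> V -> V} {A : V -> V} :
  sot_to ip S A ->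
  forall x, uequiv ip U (fun n => S n (diag_embedding x n)) (diag_embedding (A x)).
Proof. by move=> SA x; apply: rseq_to_ulimR; [exact: HU | exact: SA]. Qed.

Lemma sot_ultra_restriction (T : nat -> V -> V) (B : V -> V) :
  sot_to ip T B -> ultra_restriction ip U T B.
Proof.
move=> TB; have TBx := sot_to_uequiv_diag TB.
exists diag_embedding; split; first exact: diag_embedding_isometry.
by split=> // x; exists (B x).
Qed.

Lemma wot_ultra_compression (T : nat -> V -> V) (B : V -> V) :
  wot_to ip T B -> ultra_compression ip U T B.
Proof.
move=> TB; exists diag_embedding; split; first exact: diag_embedding_isometry.
by move=> x y; apply: cseq_to_ulimC; [exact: HU | exact: TB].
Qed.

Lemma star_sot_ultra_reducing (T Tstar : nat -> V -> V) (B Bstar : V -> V) :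
  star_sot_to ip T Tstar B Bstar -> ultra_reducing ip U T Tstar B.
Proof.
case=> TB TBstar; have TBx := sot_to_uequiv_diag TB.
have TBstarx := sot_to_uequiv_diag TBstar.
exists diag_embedding; split; first exact: diag_embedding_isometry.
by split; [|split] => // x; [exists (B x) | exists (Bstar x)].
Qed.

End DiagonalEmbedding.

Theorem lemma3p8 (R : realType) (V : lmodType R[i]) (ip : V -> V -> R[i])
  (Hhil : is_hilbert ip) (Hsep : separable ip) (Hinf : infinite_dimensional V)
  (U : (nat -> Prop) -> Prop) (HU : free_ultrafilter U)
  (T : nat -> V -> V) (HT : forall n, bounded_op ip (T n))
  (B : V -> V) (HB : bounded_op ip B) :
  (sot_to ip T B -> ultra_restriction ip U T B) /\
  (wot_to ip T B -> ultra_compression ip U T B) /\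
  (forall (Tstar : nat -> V -> V) (Bstar : V -> V),
     (forall n, is_adjoint ip (T n) (Tstar n)) -> is_adjoint ip B Bstar ->
     star_sot_to ip T Tstar B Bstar -> ultra_reducing ip U T Tstar B).
Proof.
have [Hip _] := Hhil.
split; first exact: sot_ultra_restriction.
split; first exact: wot_ultra_compression.
by move=> Tstar Bstar _ _; exact: star_sot_ultra_reducing.
Qed.
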